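(* Let $p,q$ be positive integers and let $\Phi^*:V^*_{pq}(\mathbb{C})\to\mathbb{C}^{q\times p}$ be the map $\Phi^*\binom{Z_0}{Z_1}=Z_1Z_0^{-1}$, where $Z_0\in\mathbb{C}^{p\times p}$, $Z_1\in\mathbb{C}^{q\times p}$. Then the complex valued components of $\Phi^*$ constitute an orthogonal harmonic family of $\mathbf{GL}_p(\mathbb{C})$-invariant functions on $V^*_{pq}(\mathbb{C})$, equipped with the Euclidean metric.
   Context: $U^*_{pq}(\mathbb{C})=\{\binom{Z_0}{Z_1}\in\mathbb{C}^{(p+q)\times p}: Z_0^*Z_0+Z_1^*Z_1 \text{ invertible}\}$ and $V^*_{pq}(\mathbb{C})=\{\binom{Z_0}{Z_1}\in U^*_{pq}(\mathbb{C}): \det Z_0\neq0\}$. $\mathbf{GL}_p(\mathbb{C})$ acts by right multiplication. The Euclidean metric is $\langle X,Y\rangle=\mathfrak{Re}\,\mathrm{trace}(X^*Y)$. For a Riemannian manifold $(M,g)$ and complex functions $\phi,\psi$, $\tau(\phi)$ is the Laplace–Beltrami operator (extended complex-linearly) and $\kappa(\phi,\psi)=g(\mathrm{grad}\,\phi,\mathrm{grad}\,\psi)$ with $g$ extended complex-bilinearly. A set $\Omega$ of complex functions is an orthogonal harmonic family if $\tau(\phi)=0$ and $\kappa(\phi,\psi)=0$ for all $\phi,\psi\in\Omega$. *)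

From HB Require Import structures.
From mathcomp Require Import all_boot all_order all_algebra.
From mathcomp Require Import all_classical all_reals all_analysis.
From mathcomp Require Import complex.
Set Implicit Arguments. Unset Strict Implicit. Unset Printing Implicit Defensive.
Import Order.TTheory GRing.Theory Num.Theory.
Local Open Scope ring_scope.
Local Open Scope complex_scope.

Section Defs.
Variable R : realType.
Variables m n : nat.

(* A complex valued function on C^{m x n}, viewed as the real Euclidean
   space R^{2mn} with metric <X,Y> = Re tr(X^* Y). *)
Definition cfun := 'M[R[i]]_(m, n) -> R[i].

Definition cline (phi : cfun) (v Z : 'M[R[i]]_(m, n)) (t : R) : R[i] :=
  phi (Z + (t%:C) *: v).

Definition cderivable (phi : cfun) (v Z : 'M[R[i]]_(m, n)) : Prop :=
  derivable (fun t => @complex.Re R (cline phi v Z t)) 0 1 /\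
  derivable (fun t => @complex.Im R (cline phi v Z t)) 0 1.

Definition cdir (phi : cfun) (v : 'M[R[i]]_(m, n)) : cfun :=
  fun Z => Complex (derive1 (fun t => @complex.Re R (cline phi v Z t)) 0)
                  (derive1 (fun t => @complex.Im R (cline phi v Z t)) 0).

(* The orthonormal basis of (C^{m x n}, Re tr(X^* Y)):
   the E_ij (b = false) and i E_ij (b = true). *)
Definition onb (i : 'I_m) (j : 'I_n) (b : bool) : 'M[R[i]]_(m, n) :=
  (if b then 'i else 1) *: delta_mx i j.

(* tension field / Laplace-Beltrami operator (Euclidean metric),
   extended complex-linearly *)
Definition tau (phi : cfun) : cfun :=
  fun Z => \sum_(i < m) \sum_(j < n) \sum_(b : bool)
             cdir (cdir phi (onb i j b)) (onb i j b) Z.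

(* kappa(phi,psi) = g(grad phi, grad psi), g extended complex-bilinearly *)
Definition kappa (phi psi : cfun) : cfun :=
  fun Z => \sum_(i < m) \sum_(j < n) \sum_(b : bool)
             cdir phi (onb i j b) Z * cdir psi (onb i j b) Z.

Definition twice_cderivable (phi : cfun) (Z : 'M[R[i]]_(m, n)) : Prop :=
  forall i j b, cderivable phi (onb i j b) Z /\
                cderivable (cdir phi (onb i j b)) (onb i j b) Z.

Definition orthogonal_harmonic_family (D : set 'M[R[i]]_(m, n))
    (Omega : set cfun) : Prop :=
  (forall phi, Omega phi -> forall Z, D Z ->
      twice_cderivable phi Z /\ tau phi Z = 0) /\
  (forall phi psi, Omega phi -> Omega psi -> forall Z, D Z ->
      (forall i j b, cderivable phi (onb i j b) Z /\
                     cderivable psi (onb i j b) Z) /\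
      kappa phi psi Z = 0).
End Defs.

Section Grass.
Variable R : realType.
Variables p q : nat.

Definition Ustar : set 'M[R[i]]_(p + q, p) :=
  [set Z | let Z0 := usubmx Z in let Z1 := dsubmx Z in
           ((map_mx conjc Z0)^T *m Z0 + (map_mx conjc Z1)^T *m Z1) \in unitmx].

Definition Vstar : set 'M[R[i]]_(p + q, p) :=
  [set Z | Ustar Z /\ \det (usubmx Z) != 0].

Definition Phistar (Z : 'M[R[i]]_(p + q, p)) : 'M[R[i]]_(q, p) :=
  dsubmx Z *m invmx (usubmx Z).

Definition Phistar_components : set (cfun R (p + q) p) :=
  [set phi | exists (a : 'I_q) (b : 'I_p), phi = fun Z => Phistar Z a b].

Definition GL_invariant (D : set 'M[R[i]]_(p + q, p)) (phi : cfun R (p + q) p) :=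
  forall Z g, D Z -> g \in unitmx -> phi (Z *m g) = phi Z.
End Grass.

From HB Require Import structures.
From mathcomp Require Import all_boot all_order all_algebra.
From mathcomp Require Import all_classical all_reals all_analysis.
From mathcomp Require Import complex.
From mathcomp Require Import ring lra.
Set Implicit Arguments. Unset Strict Implicit. Unset Printing Implicit Defensive.
Import Order.TTheory GRing.Theory Num.Theory numFieldNormedType.Exports.
Local Open Scope ring_scope.
Local Open Scope complex_scope.

(* Fix Z in V* and a matrix unit E.  By the Sherman-Morrison formula every entry
   of Phi*(Z + w E) is a Moebius function x + w y + w u / (1 + w d) of the complex
   variable w, hence holomorphic in w: along the real direction c E, c in {1, i},
   its first and second derivatives at Z are c f'(0) and c^2 f''(0).  Summing over
   the two directions, the factor 1 + i^2 = 0 kills both tau and kappa.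
   GL_p-invariance is (Z1 g) (Z0 g)^-1 = Z1 Z0^-1. *)

Section ComplexValuedDerivative.
Variable R : realType.
Implicit Types (f g : R -> R[i]) (t : R) (x y u v : R[i]).
Local Notation Re := (@complex.Re R).
Local Notation Im := (@complex.Im R).

Lemma Re_add x y : Re (x + y) = Re x + Re y. Proof. by case: x => a b; case: y => c d. Qed.
Lemma Im_add x y : Im (x + y) = Im x + Im y. Proof. by case: x => a b; case: y => c d. Qed.
Lemma Re_mul x y : Re (x * y) = Re x * Re y - Im x * Im y.
Proof. by case: x => a b; case: y => c d. Qed.
Lemma Im_mul x y : Im (x * y) = Re x * Im y + Im x * Re y.
Proof. by case: x => a b; case: y => c d. Qed.
Lemma Re_inv x : Re x^-1 = Re x / (Re x ^+ 2 + Im x ^+ 2). Proof. by case: x => a b. Qed.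
Lemma Im_inv x : Im x^-1 = - (Im x / (Re x ^+ 2 + Im x ^+ 2)). Proof. by case: x => a b. Qed.

Lemma sqr_Re_Im_neq0 x : x != 0 -> Re x ^+ 2 + Im x ^+ 2 != 0.
Proof.
case: x => a b /=; apply: contraNneq => ab0; apply/eqP.
have /andP[] : (a ^+ 2 == 0) && (b ^+ 2 == 0) by rewrite -paddr_eq0 ?sqr_ge0 ?ab0.
by rewrite !sqrf_eq0 => /eqP-> /eqP->.
Qed.

Definition is_cderive f t v :=
  is_derive t 1 (fun s => Re (f s)) (Re v) /\ is_derive t 1 (fun s => Im (f s)) (Im v).

Lemma is_cderive_cst x t : is_cderive (fun=> x) t 0.
Proof. by split; apply: is_derive_cst. Qed.

Lemma is_cderive_id t : is_cderive (fun s => s%:C) t 1.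
Proof. by split; [apply: is_derive_id | apply: is_derive_cst]. Qed.

Lemma is_cderiveD f g t u v :
  is_cderive f t u -> is_cderive g t v -> is_cderive (fun s => f s + g s) t (u + v).
Proof.
move=> [fRe fIm] [gRe gIm]; rewrite /is_cderive Re_add Im_add; split.
  have -> : (fun s => Re (f s + g s)) = (fun s => Re (f s)) \+ (fun s => Re (g s)).
    by apply/funext => s; rewrite /= Re_add.
  exact: is_deriveD.
have -> : (fun s => Im (f s + g s)) = (fun s => Im (f s)) \+ (fun s => Im (g s)).
  by apply/funext => s; rewrite /= Im_add.
exact: is_deriveD.
Qed.

Lemma is_cderiveM f g t u v : is_cderive f t u -> is_cderive g t v ->
  is_cderive (fun s => f s * g s) t (u * g t + f t * v).
Proof.
move=> [fRe fIm] [gRe gIm]; split.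
  have -> : (fun s => Re (f s * g s)) =
            (fun s => Re (f s)) * (fun s => Re (g s)) - (fun s => Im (f s)) * (fun s => Im (g s)).
    by apply/funext => s; rewrite /= Re_mul.
  apply: is_derive_eq (is_deriveB (is_deriveM fRe gRe) (is_deriveM fIm gIm)) _.
  by rewrite Re_add !Re_mul /GRing.scale /=; ring.
have -> : (fun s => Im (f s * g s)) =
          (fun s => Re (f s)) * (fun s => Im (g s)) + (fun s => Im (f s)) * (fun s => Re (g s)).
  by apply/funext => s; rewrite /= Im_mul.
apply: is_derive_eq (is_deriveD (is_deriveM fRe gIm) (is_deriveM fIm gRe)) _.
by rewrite Im_add !Im_mul /GRing.scale /=; ring.
Qed.

Lemma is_cderiveV f t v : f t != 0 -> is_cderive f t v ->
  is_cderive (fun s => (f s)^-1) t (- v / f t ^+ 2).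
Proof.
move=> ft0 [fRe fIm].
pose nrm s := Re (f s) * Re (f s) + Im (f s) * Im (f s).
have nrm0 : nrm t != 0 by rewrite /nrm -!expr2 sqr_Re_Im_neq0.
have dVnrm := is_deriveV nrm0 (is_deriveD (is_deriveM fRe fRe) (is_deriveM fIm fIm)).
have ab0 := sqr_Re_Im_neq0 ft0.
have sqr_nrm (a b : R) : (a * a - b * b) ^+ 2 + (a * b + b * a) ^+ 2 = (a ^+ 2 + b ^+ 2) ^+ 2.
  by ring.
split.
  have -> : (fun s => Re (f s)^-1) = (fun s => Re (f s)) * (fun s => (nrm s)^-1).
    by apply/funext => s; rewrite Re_inv /nrm !expr2.
  apply: is_derive_eq (is_deriveM fRe dVnrm) _.
  rewrite /GRing.scale /= /nrm.
  move: (f t) ab0 => [a b] /= ab0; case: v {fRe fIm dVnrm} => c d /=.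
  by rewrite sqr_nrm; field.
have -> : (fun s => Im (f s)^-1) = - ((fun s => Im (f s)) * (fun s => (nrm s)^-1)).
  by apply/funext => s; rewrite Im_inv /nrm !expr2.
apply: is_derive_eq (is_deriveN (is_deriveM fIm dVnrm)) _.
rewrite /GRing.scale /= /nrm.
move: (f t) ab0 => [a b] /= ab0; case: v {fRe fIm dVnrm} => c d /=.
by rewrite sqr_nrm; field.
Qed.

Lemma is_cderive_shift f t v : is_cderive f t v -> is_cderive (fun s => f (s + t)) 0 v.
Proof.
have shift0 : t = shift t 0 by rewrite /= add0r.
have dshift := is_derive_shift (0 : R) 1 t.
move=> [fRe fIm]; rewrite shift0 in fRe fIm; split.
  by rewrite -[Re v]mulr1; apply: (is_derive1_comp fRe).
by rewrite -[Im v]mulr1; apply: (is_derive1_comp fIm).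
Qed.

Lemma near_eq_is_cderive f g t v :
  (\forall s \near t, f s = g s) -> is_cderive f t v -> is_cderive g t v.
Proof.
move=> fg [fRe fIm].
by split; [apply: near_eq_is_derive fRe | apply: near_eq_is_derive fIm];
  apply: filterS fg => s /= ->.
Qed.

Lemma cdir_is_cderive m n (phi : cfun R m n) (v Z : 'M[R[i]]_(m, n)) w :
  is_cderive (cline phi v Z) 0 w -> cderivable phi v Z /\ cdir phi v Z = w.
Proof.
move=> [[dRe Re_eq] [dIm Im_eq]]; split => //.
by rewrite /cdir !derive1E Re_eq Im_eq; case: (w).
Qed.

Lemma near0_norm_addr_lt (r s : R) : `|s| < r -> \forall t \near 0, `|t + s| < r.
Proof.
move=> sr; apply/nbhs_ballP; exists (r - `|s|); first by rewrite /= subr_gt0.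
move=> t; rewrite /ball /= sub0r normrN => tr.
by rewrite (le_lt_trans (ler_normD _ _)) // -ltrBrDr.
Qed.

Lemma cdir2_of_line m n (phi : cfun R m n) (v Z : 'M[R[i]]_(m, n)) f f' (r : R) w :
  0 < r -> (forall t, `|t| < r -> phi (Z + t%:C *: v) = f t) ->
  (forall t, `|t| < r -> is_cderive f t (f' t)) -> is_cderive f' 0 w ->
  [/\ cderivable phi v Z, cdir phi v Z = f' 0,
      cderivable (cdir phi v) v Z & cdir (cdir phi v) v Z = w].
Proof.
move=> r0 phi_f df df'.
have cdir_shift s : `|s| < r ->
    cderivable phi v (Z + s%:C *: v) /\ cdir phi v (Z + s%:C *: v) = f' s.
  move=> sr; apply/cdir_is_cderive/(near_eq_is_cderive _ (is_cderive_shift (df s sr))).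
  apply: filterS (near0_norm_addr_lt sr) => t tsr.
  by rewrite /cline -addrA -scalerDl -rmorphD [s + t]addrC phi_f.
have r0' : `|0 : R| < r by rewrite normr0.
have [dphi cdir_phi] := cdir_shift 0 r0'; rewrite scale0r addr0 in dphi cdir_phi.
suff [] : cderivable (cdir phi v) v Z /\ cdir (cdir phi v) v Z = w by [].
apply/cdir_is_cderive/(near_eq_is_cderive _ df').
apply: filterS (near0_norm_addr_lt r0') => t; rewrite addr0 => tr.
by rewrite /cline; case: (cdir_shift t tr).
Qed.
End ComplexValuedDerivative.

Section Mobius.
Variable R : realType.
Implicit Types (t : R) (x y u d c w : R[i]).

Definition mobius x y u d w := x + w * y + w * u / (1 + w * d).

Definition mobius_deriv y u d w := y + u / (1 + w * d) ^+ 2.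

Lemma is_cderive_mobius_line x y u d c t : 1 + t%:C * c * d != 0 ->
  is_cderive (fun s => mobius x y u d (s%:C * c)) t (c * mobius_deriv y u d (t%:C * c)).
Proof.
move=> den0.
have dw := is_cderiveM (is_cderive_id t) (is_cderive_cst c t).
have dden := is_cderiveD (is_cderive_cst 1 t) (is_cderiveM dw (is_cderive_cst d t)).
have := is_cderiveD (is_cderiveD (is_cderive_cst x t) (is_cderiveM dw (is_cderive_cst y t)))
          (is_cderiveM (is_cderiveM dw (is_cderive_cst u t)) (is_cderiveV den0 dden)).
by congr is_cderive; rewrite /mobius_deriv; field.
Qed.

Lemma is_cderive_mobius_deriv_line y u d c :
  is_cderive (fun s => c * mobius_deriv y u d (s%:C * c)) 0 (c ^+ 2 * (- (2 * u * d))).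
Proof.
have dw := is_cderiveM (is_cderive_id 0) (is_cderive_cst c 0).
have dden := is_cderiveD (is_cderive_cst 1 0) (is_cderiveM dw (is_cderive_cst d 0)).
have den0 : (1 + (0 : R)%:C * c * d) ^+ 2 != 0 by rewrite rmorph0 !mul0r addr0 expr1n oner_neq0.
have := is_cderiveM (is_cderive_cst c 0) (is_cderiveD (is_cderive_cst y 0)
          (is_cderiveM (is_cderive_cst u 0) (is_cderiveV den0 (is_cderiveM dden dden)))).
by congr is_cderive; rewrite rmorph0; field.
Qed.

Lemma one_add_line_neq0 (a : R[i]) :
  exists2 r : R, 0 < r & forall t, `|t| < r -> 1 + t%:C * a != 0.
Proof.
have k1_gt0 : 0 < 1 + `|complex.Re a| by rewrite ltr_pwDl.
exists (1 + `|complex.Re a|)^-1; first by rewrite invr_gt0.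
move=> t tr; apply/eqP => /(congr1 (@complex.Re R)).
rewrite Re_add Re_mul /= mul0r subr0 => /eqP; rewrite addrC addr_eq0 => /eqP ta.
have : `|t| * `|complex.Re a| = 1 by rewrite -normrM ta normrN normr1.
have : `|t| * (1 + `|complex.Re a|) < 1 by rewrite -ltr_pdivlMr // div1r.
have : 0 <= `|t| by [].
nra.
Qed.

Lemma cdir_mobius m n (phi : cfun R m n) (v Z : 'M[R[i]]_(m, n)) x y u d c :
  (forall w, 1 + w * d != 0 -> phi (Z + w *: v) = mobius x y u d w) ->
  [/\ cderivable phi (c *: v) Z, cdir phi (c *: v) Z = c * (y + u),
      cderivable (cdir phi (c *: v)) (c *: v) Z &
      cdir (cdir phi (c *: v)) (c *: v) Z = c ^+ 2 * (- (2 * u * d))].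
Proof.
move=> phi_mobius; have [r r0 den0] := one_add_line_neq0 (c * d).
have [] := cdir2_of_line (phi := phi) (v := c *: v) (Z := Z)
  (f := fun t => mobius x y u d (t%:C * c)) r0 _ _ (is_cderive_mobius_deriv_line y u d c).
- by move=> t tr; rewrite scalerA phi_mobius // -mulrA den0.
- by move=> t tr; apply: is_cderive_mobius_line; rewrite -mulrA den0.
by move=> ? -> ? ->; rewrite /mobius_deriv rmorph0 !mul0r addr0 expr1n divr1.
Qed.

End Mobius.

Section RankOneUpdate.
Variable K : fieldType.

Lemma mulmx_deltaE m n p (A : 'M[K]_(m, n)) k (j : 'I_p) r s :
  (A *m delta_mx k j) r s = A r k * (j == s)%:R.
Proof.
rewrite mxE (bigD1 k) //= big1 ?addr0; first by rewrite mxE eqxx eq_sym.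
by move=> l /negPf lk; rewrite mxE lk mulr0.
Qed.

Lemma delta_mulmxE m n p (A : 'M[K]_(n, p)) (k : 'I_m) j r s :
  (delta_mx k j *m A) r s = (r == k)%:R * A j s.
Proof.
rewrite mxE (bigD1 j) //= big1 ?addr0; first by rewrite mxE eqxx andbT.
by move=> l /negPf lj; rewrite mxE lj andbF mul0r.
Qed.

Lemma mulmx_delta_mulmxE m n p o (A : 'M[K]_(m, n)) (B : 'M[K]_(p, o)) k j r s :
  (A *m delta_mx k j *m B) r s = A r k * B j s.
Proof.
rewrite mxE (bigD1 j) //= big1 ?addr0; first by rewrite mulmx_deltaE eqxx mulr1.
by move=> l /negPf lj; rewrite mulmx_deltaE eq_sym lj mulr0 mul0r.
Qed.

(* Sherman--Morrison formula for a rank-one perturbation by a matrix unit. *)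
Lemma invmxD_delta n (A : 'M[K]_n) k j w : A \in unitmx ->
  1 + w * invmx A j k != 0 ->
  invmx (A + w *: delta_mx k j) =
  invmx A - (w / (1 + w * invmx A j k)) *: (invmx A *m delta_mx k j *m invmx A).
Proof.
move=> uA den0; set M := invmx A; set s := w / _.
have dMd : delta_mx k j *m M *m delta_mx k j = M j k *: delta_mx k j.
  apply/matrixP => r t; rewrite mulmx_deltaE delta_mulmxE !mxE [j == t]eq_sym.
  by case: (r == k); case: (t == j); rewrite ?mul1r ?mul0r ?mulr1 ?mulr0.
have inv_right : (A + w *: delta_mx k j) *m (M - s *: (M *m delta_mx k j *m M)) = 1%:M.
  rewrite mulmxDl !mulmxBr mulmxV // -!scalemxAr -!scalemxAl !mulmxA mulmxV // mul1mx.
  rewrite dMd -scalemxAl !scalerA -scalerBl.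
  suff -> : w - s * w * M j k = s by rewrite addrNK.
  by rewrite /s; field.
have [uAw _] := mulmx1_unit inv_right.
by rewrite -[LHS]mulmx1 -inv_right mulmxA mulVmx // mul1mx.
Qed.

Lemma invmxM n (A B : 'M[K]_n) : A \in unitmx -> B \in unitmx ->
  invmx (A *m B) = invmx B *m invmx A.
Proof.
move=> uA uB; have uAB : A *m B \in unitmx by rewrite unitmx_mul uA.
have inv_right : A *m B *m (invmx B *m invmx A) = 1%:M by rewrite mulmxA mulmxK // mulmxV.
by rewrite -[LHS]mulmx1 -inv_right mulmxA mulVmx // mul1mx.
Qed.

End RankOneUpdate.

Section PhistarEntries.
Variables (R : realType) (p q : nat).
Implicit Types (Z : 'M[R[i]]_(p + q, p)).

Lemma Phistar_add_delta Z a b i j : Vstar Z -> exists x y u d : R[i],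
  forall w, 1 + w * d != 0 -> Phistar (Z + w *: delta_mx i j) a b = mobius x y u d w.
Proof.
move=> [_ detZ0]; have uZ0 : usubmx Z \in unitmx by rewrite unitmxE unitfE.
set M := invmx (usubmx Z).
case: (splitP i) => k ik.
- have -> : i = lshift q k by apply: val_inj.
  exists ((dsubmx Z *m M) a b), 0, (- ((dsubmx Z *m M) a k * M j b)), (M j k) => w den0.
  rewrite /Phistar -[Z in Z + _]vsubmxK delta_mx_ushift scale_col_mx scaler0.
  rewrite add_col_mx addr0 col_mxKu col_mxKd invmxD_delta // -/M mulmxBr -scalemxAr.
  rewrite [LHS]mxE [X in _ + X]mxE [X in _ - X]mxE !mulmxA mulmx_delta_mulmxE.
  by rewrite /mobius; field.
have -> : i = rshift p k by apply: val_inj.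
exists ((dsubmx Z *m M) a b), ((a == k)%:R * M j b), 0, 0 => w _.
rewrite /Phistar -[Z in Z + _]vsubmxK delta_mx_dshift scale_col_mx scaler0.
rewrite add_col_mx addr0 col_mxKu col_mxKd -/M mulmxDl -scalemxAl.
by rewrite [LHS]mxE [X in _ + X]mxE delta_mulmxE /mobius !mulr0 mul0r addr0.
Qed.

Lemma Phistar_mulmx Z g : \det (usubmx Z) != 0 -> g \in unitmx ->
  Phistar (Z *m g) = Phistar Z.
Proof.
move=> detZ0 ug; have uZ0 : usubmx Z \in unitmx by rewrite unitmxE unitfE.
by rewrite /Phistar -mul_usub_mx -mul_dsub_mx invmxM // mulmxA mulmxK.
Qed.

Lemma Phistar_cdir Z a b i j : Vstar Z -> exists y e : R[i], forall c,
  [/\ cderivable (fun Z => Phistar Z a b) (c *: delta_mx i j) Z,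
      cdir (fun Z => Phistar Z a b) (c *: delta_mx i j) Z = c * y,
      cderivable (cdir (fun Z => Phistar Z a b) (c *: delta_mx i j)) (c *: delta_mx i j) Z &
      cdir (cdir (fun Z => Phistar Z a b) (c *: delta_mx i j)) (c *: delta_mx i j) Z
        = c ^+ 2 * e].
Proof.
move=> VZ; have [x [y [u [d line]]]] := Phistar_add_delta a b i j VZ.
by exists (y + u), (- (2 * u * d)) => c; apply: (cdir_mobius (phi := fun Z => Phistar Z a b)) line.
Qed.

End PhistarEntries.

Lemma sum_onb_scale_sqr (R : realType) (k : R[i]) :
  \sum_(b : bool) (if b then 'i else 1) ^+ 2 * k = 0.
Proof. by rewrite big_bool /= sqr_i expr1n mulN1r mul1r addNr. Qed.

Theorem proposition8p1 (R : realType) (p q : nat) (hp : (0 < p)%N) (hq : (0 < q)%N) :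
  orthogonal_harmonic_family (@Vstar R p q) (@Phistar_components R p q) /\
  (forall phi, @Phistar_components R p q phi -> @GL_invariant R p q (@Vstar R p q) phi).
Proof.
split; first split.
- move=> _ [a [b ->]] Z VZ; split.
    move=> i j bb; have [y [e cdirs]] := Phistar_cdir a b i j VZ.
    by case: (cdirs (if bb then 'i else 1)).
  rewrite /tau; apply: big1 => i _; apply: big1 => j _.
  have [y [e cdirs]] := Phistar_cdir a b i j VZ.
  rewrite -[RHS](sum_onb_scale_sqr e); apply: eq_bigr => bb _.
  by case: (cdirs (if bb then 'i else 1)).
- move=> _ _ [a [b ->]] [a' [b' ->]] Z VZ; split.
    move=> i j bb; have [y [e cdirs]] := Phistar_cdir a b i j VZ.
    have [y' [e' cdirs']] := Phistar_cdir a' b' i j VZ.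
    by case: (cdirs (if bb then 'i else 1)); case: (cdirs' (if bb then 'i else 1)).
  rewrite /kappa; apply: big1 => i _; apply: big1 => j _.
  have [y [e cdirs]] := Phistar_cdir a b i j VZ.
  have [y' [e' cdirs']] := Phistar_cdir a' b' i j VZ.
  rewrite -[RHS](sum_onb_scale_sqr (y * y')); apply: eq_bigr => bb _.
  case: (cdirs (if bb then 'i else 1)) => _ -> _ _.
  by case: (cdirs' (if bb then 'i else 1)) => _ -> _ _; rewrite mulrACA expr2.
- by move=> _ [a [b ->]] Z g [_ detZ0] ug; rewrite Phistar_mulmx.
Qed.
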